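(* Let $\pi$ be a permutation and let $\omega$ be an occurrence in $\pi$ of the mesh pattern $j_2=(34251,\{(2,4),(2,5)\})$. Then the entries of $\omega$ playing roles $1,2,3,4$ form (in the same roles) an occurrence in $S(\pi)$ of the mesh pattern $W_2=(3241,\{(1,4)\})$ if and only if $\omega$ extends to an occurrence in $\pi$ of one of the patterns $J_{2,1},\dots,J_{2,12}$ below in such a way that the uncircled entries of the pattern are exactly the entries of $\omega$, in the same order. Each pattern is given as: underlying pattern (listed by position); circled entries (as (position, value) in the pattern); shaded boxes; decorated region. $J_{2,1}$: $345261$; circled $(2,4)$; shaded $\{(1,3),(1,4),(1,5),(1,6),(2,5),(2,6),(3,5),(3,6)\}$; no decoration. $J_{2,2}$: $3465271$; circled $(2,4),(3,6)$; shaded $\{(0,5),(1,3),(1,4),(1,5),(1,6),(1,7),(2,5),(2,6),(2,7),(3,6),(3,7),(4,5),(4,6),(4,7)\}$; decorated $\{(3,5)\}$. $J_{2,3}$: $73465281$; circled $(1,7),(3,4),(4,6)$; shaded $\{(1,5),(1,6),(1,7),(1,8)\}\cup\{(2,b):3\le b\le 8\}\cup\{(3,5),(3,6),(3,7),(3,8),(4,6),(4,7),(4,8),(5,5),(5,6),(5,7),(5,8)\}$; decorated $\{(4,5)\}$. $J_{2,4}$: $83465271$; circled $(1,8),(3,4),(4,6)$; shaded and decorated as for $J_{2,3}$. $J_{2,5}$: $3475261$; circled $(2,4),(3,7)$; shaded $\{(0,5),(0,6),(1,3),(1,4),(1,5),(1,6),(1,7),(2,5),(2,6),(2,7),(3,7),(4,5),(4,6),(4,7)\}$;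 decorated $\{(3,5),(3,6)\}$. $J_{2,6}$: $83475261$; circled $(1,8),(3,4),(4,7)$; shaded $\{(1,5),(1,6),(1,7),(1,8)\}\cup\{(2,b):3\le b\le 8\}\cup\{(3,5),(3,6),(3,7),(3,8),(4,7),(4,8),(5,5),(5,6),(5,7),(5,8)\}$; decorated $\{(4,5),(4,6)\}$. $J_{2,7}$: $354261$; circled $(2,5)$; shaded $\{(0,4),(1,3),(1,4),(1,5),(1,6),(2,5),(2,6),(3,4),(3,5),(3,6)\}$; decorated $\{(2,4)\}$. $J_{2,8}$: $6354271$; circled $(1,6),(3,5)$; shaded $\{(1,4),(1,5),(1,6),(1,7)\}\cup\{(2,b):3\le b\le 7\}\cup\{(3,5),(3,6),(3,7),(4,4),(4,5),(4,6),(4,7)\}$; decorated $\{(3,4)\}$. $J_{2,9}$: $7354261$; circled $(1,7),(3,5)$; shaded and decorated as for $J_{2,8}$. $J_{2,10}$: $364251$; circled $(2,6)$; shaded $\{(0,4),(0,5),(1,3),(1,4),(1,5),(1,6),(2,6),(3,4),(3,5),(3,6)\}$; decorated $\{(2,4),(2,5)\}$. $J_{2,11}$: $7364251$; circled $(1,7),(3,6)$; shaded $\{(1,4),(1,5),(1,6),(1,7)\}\cup\{(2,b):3\le b\le 7\}\cup\{(3,6),(3,7),(4,4),(4,5),(4,6),(4,7)\}$; decorated $\{(3,4),(3,5)\}$. $J_{2,12}$: $34251$; no circled entries; shaded $\{(1,3),(1,4),(1,5),(2,4),(2,5)\}$; no decoration.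
   Context: Permutations are in one-line notation. For a sequence $w$ of distinct integers, the stack-sort $S(w)$ is defined by $S(\varepsilon)=\varepsilon$ and $S(\alpha m\beta)=S(\alpha)S(\beta)m$ where $m$ is the largest entry of $w$. An occurrence of a classical pattern $p$ of length $k$ in a permutation $\sigma$ of length $n$ is a set of entries at positions $i_1<\dots<i_k$ whose values are order-isomorphic to $p$; the entry corresponding to letter $r$ of $p$ plays role $r$. With values $v_1<\dots<v_k$ of the occurrence and $i_0=v_0=0$, $i_{k+1}=v_{k+1}=n+1$, the box $(a,b)$ ($0\le a,b\le k$) is the set of entries $\sigma(x)$ with $i_a<x<i_{a+1}$, $v_b<\sigma(x)<v_{b+1}$. A pattern with shaded boxes $R$ and decorated region $D$ occurs when an occurrence of the underlying classical pattern has every box in $R$ empty and the entries lying in the union of the boxes of $D$, read left to right, form a decreasing sequence (avoid $12$). A mesh pattern $(p,R)$ has no decorated region. *)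

From mathcomp Require Import all_boot.
Set Implicit Arguments. Unset Strict Implicit. Unset Printing Implicit Defensive.

Definition is_perm (s : seq nat) : bool := perm_eq s (iota 1 (size s)).

Definition val_at (s : seq nat) (x : nat) : nat := nth 0 s x.-1.

(* Stack-sort: S(eps)=eps, S(alpha m beta) = S(alpha) S(beta) m, m the maximum.
   Fuel = size w is enough since the recursive calls are on strictly shorter words. *)
Fixpoint ss_fuel (f : nat) (w : seq nat) : seq nat :=
  match f with
  | 0 => [::]
  | f'.+1 =>
    match w with
    | [::] => [::]
    | _ => let m := foldr maxn 0 w in
           let i := index m w in
           ss_fuel f' (take i w) ++ ss_fuel f' (drop i.+1 w) ++ [:: m]
    end
  end.
Definition stack_sort (w : seq nat) : seq nat := ss_fuel (size w) w.

Record dpattern := DPat {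
  dp_pat : seq nat;
  dp_shade : seq (nat * nat);
  dp_deco : seq (nat * nat)      (* boxes whose union is the decorated region *)
}.

Section Occ.
Variables (s p : seq nat) (q : seq nat).
(* q = list of 1-based positions i_1 < ... < i_k of the occurrence *)
Let n := size s.
Let k := size p.

Definition classical_occ : bool :=
  [&& size q == k, sorted ltn q, all (fun x => 0 < x <= n) q &
   all (fun a => all (fun b =>
      (val_at s (nth 0 q a) < val_at s (nth 0 q b)) ==
      (nth 0 p a < nth 0 p b)) (iota 0 k)) (iota 0 k)].

Definition iext (a : nat) : nat :=
  if a == 0 then 0 else if a == k.+1 then n.+1 else nth 0 q a.-1.
Definition vext (b : nat) : nat :=
  if b == 0 then 0 else if b == k.+1 then n.+1
  else nth 0 (sort leq (map (val_at s) q)) b.-1.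

Definition in_box (ab : nat * nat) (x : nat) : bool :=
  [&& iext ab.1 < x < iext ab.1.+1 & vext ab.2 < val_at s x < vext ab.2.+1].

Definition box_positions (ab : nat * nat) : seq nat :=
  [seq x <- iota 1 n | in_box ab x].
End Occ.

Definition occurs_at (s : seq nat) (P : dpattern) (q : seq nat) : bool :=
  [&& classical_occ s (dp_pat P) q,
      all (fun ab => nilp (box_positions s (dp_pat P) q ab)) (dp_shade P) &
      sorted gtn [seq val_at s x | x <- iota 1 (size s)
                  & has (fun ab => in_box s (dp_pat P) q ab x) (dp_deco P)]].

Definition j2 : dpattern := DPat [:: 3; 4; 2; 5; 1] [:: (2,4); (2,5)] [::].
Definition W2 : dpattern := DPat [:: 3; 2; 4; 1] [:: (1,4)] [::].

(* A pattern with circled entries: circled given by their 1-based positions. *)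
Record cpattern := CPat { cp_dp : dpattern; cp_circled : seq nat }.

Definition uncircled (C : cpattern) (q : seq nat) : seq nat :=
  [seq nth 0 q i.-1 | i <- iota 1 (size q) & i \notin cp_circled C].

Definition sh3 : seq (nat*nat) :=
  [:: (1,5); (1,6); (1,7); (1,8);
      (2,3); (2,4); (2,5); (2,6); (2,7); (2,8);
      (3,5); (3,6); (3,7); (3,8); (4,6); (4,7); (4,8);
      (5,5); (5,6); (5,7); (5,8)].
Definition sh6 : seq (nat*nat) :=
  [:: (1,5); (1,6); (1,7); (1,8);
      (2,3); (2,4); (2,5); (2,6); (2,7); (2,8);
      (3,5); (3,6); (3,7); (3,8); (4,7); (4,8);
      (5,5); (5,6); (5,7); (5,8)].
Definition sh8 : seq (nat*nat) :=
  [:: (1,4); (1,5); (1,6); (1,7);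
      (2,3); (2,4); (2,5); (2,6); (2,7);
      (3,5); (3,6); (3,7); (4,4); (4,5); (4,6); (4,7)].
Definition sh11 : seq (nat*nat) :=
  [:: (1,4); (1,5); (1,6); (1,7);
      (2,3); (2,4); (2,5); (2,6); (2,7);
      (3,6); (3,7); (4,4); (4,5); (4,6); (4,7)].

Definition J2_1 := CPat (DPat [:: 3;4;5;2;6;1]
  [:: (1,3);(1,4);(1,5);(1,6);(2,5);(2,6);(3,5);(3,6)] [::]) [:: 2].
Definition J2_2 := CPat (DPat [:: 3;4;6;5;2;7;1]
  [:: (0,5);(1,3);(1,4);(1,5);(1,6);(1,7);(2,5);(2,6);(2,7);(3,6);(3,7);
      (4,5);(4,6);(4,7)] [:: (3,5)]) [:: 2; 3].
Definition J2_3 := CPat (DPat [:: 7;3;4;6;5;2;8;1] sh3 [:: (4,5)]) [:: 1; 3; 4].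
Definition J2_4 := CPat (DPat [:: 8;3;4;6;5;2;7;1] sh3 [:: (4,5)]) [:: 1; 3; 4].
Definition J2_5 := CPat (DPat [:: 3;4;7;5;2;6;1]
  [:: (0,5);(0,6);(1,3);(1,4);(1,5);(1,6);(1,7);(2,5);(2,6);(2,7);(3,7);
      (4,5);(4,6);(4,7)] [:: (3,5);(3,6)]) [:: 2; 3].
Definition J2_6 := CPat (DPat [:: 8;3;4;7;5;2;6;1] sh6 [:: (4,5);(4,6)]) [:: 1; 3; 4].
Definition J2_7 := CPat (DPat [:: 3;5;4;2;6;1]
  [:: (0,4);(1,3);(1,4);(1,5);(1,6);(2,5);(2,6);(3,4);(3,5);(3,6)]
  [:: (2,4)]) [:: 2].
Definition J2_8 := CPat (DPat [:: 6;3;5;4;2;7;1] sh8 [:: (3,4)]) [:: 1; 3].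
Definition J2_9 := CPat (DPat [:: 7;3;5;4;2;6;1] sh8 [:: (3,4)]) [:: 1; 3].
Definition J2_10 := CPat (DPat [:: 3;6;4;2;5;1]
  [:: (0,4);(0,5);(1,3);(1,4);(1,5);(1,6);(2,6);(3,4);(3,5);(3,6)]
  [:: (2,4);(2,5)]) [:: 2].
Definition J2_11 := CPat (DPat [:: 7;3;6;4;2;5;1] sh11 [:: (3,4);(3,5)]) [:: 1; 3].
Definition J2_12 := CPat (DPat [:: 3;4;2;5;1]
  [:: (1,3);(1,4);(1,5);(2,4);(2,5)] [::]) [::].

Definition J2_list : seq cpattern :=
  [:: J2_1; J2_2; J2_3; J2_4; J2_5; J2_6; J2_7; J2_8; J2_9; J2_10; J2_11; J2_12].

(* Write i1 < i2 < i3 < i4 < i5 for the positions of w, so that the entries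
   playing roles 3, 2, 4, 1 of W2 are pi(i1), pi(i3), pi(i2), pi(i5).
   Stack sorting puts w_j before w_i (i < j) exactly when w_i exceeds every
   entry of w at positions i+1..j.  Hence these four entries always occur in
   S(pi) in the order of W2, and the shaded box of W2 is nonempty iff some p
   with pi(p) > pi(i2), lying before i2 and not hidden behind a larger entry
   before i1, is followed before i2 by a larger entry.  Excluding this means:
   either every entry strictly between i1 and i2 is below pi(i2), or the first
   entry y there above pi(i2) starts a decreasing run of large entries up to i2
   and every visible large entry before i1 exceeds pi(y).  The patterns J2_k
   enumerate these situations: they are determined by the first entry x after
   i1 above pi(i1), the entry y, the last entry z before i1 above pi(i2), and
   the relative order of pi(y), pi(z) and pi(i4). *)

From Stdlib Require Import List.
From mathcomp Require Import all_boot zify.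
Set Implicit Arguments. Unset Strict Implicit. Unset Printing Implicit Defensive.

Definition dominates (w : seq nat) (i j : nat) : Prop :=
  forall k, i < k <= j -> nth 0 w k < nth 0 w i.

Definition stack_sort_spec (w s : seq nat) : Prop :=
  perm_eq s w /\ forall i j, i < j < size w ->
    index (nth 0 w j) s < index (nth 0 w i) s <-> dominates w i j.

Lemma dominates_catl x y i j : j < size x ->
  dominates (x ++ y) i j <-> dominates x i j.
Proof.
move=> hj; have lt_x k : k <= j -> k < size x by move=> ?; apply: leq_ltn_trans hj.
by split=> h k /[dup] hk /andP[ik kj]; have := h k hk;
  rewrite !nth_cat (lt_x k kj) (lt_x i (ltnW (leq_trans ik kj))).
Qed.

Lemma dominates_catr x y i j :
  dominates (x ++ y) (size x + i) (size x + j) <-> dominates y i j.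
Proof.
have nthr k : nth 0 (x ++ y) (size x + k) = nth 0 y k.
  by rewrite nth_cat ltnNge leq_addr /= addKn.
split=> h k hk.
  by have := h (size x + k); rewrite !nthr; apply; lia.
have -> : k = size x + (k - size x) by lia.
by rewrite !nthr; apply: h; lia.
Qed.

Lemma foldr_maxn_ge w y : y \in w -> y <= foldr maxn 0 w.
Proof. by elim: w => //= x w IH; rewrite inE => /orP [/eqP->|/IH]; lia. Qed.

Lemma foldr_maxn_mem w : w != [::] -> foldr maxn 0 w \in w.
Proof.
elim: w => //= x [|y w] IH _; rewrite inE; first by rewrite maxn0 eqxx.
by have := IH isT; rewrite /maxn; case: ltnP => _ h; rewrite ?h ?orbT ?eqxx.
Qed.

Lemma index_stack_cat (a b : seq nat) (m : nat) (Sa Sb : seq nat) :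
  uniq (a ++ m :: b) -> perm_eq Sa a -> perm_eq Sb b ->
  [/\ {in a, forall u, index u (Sa ++ Sb ++ [:: m]) = index u Sa},
      {in b, forall u, index u (Sa ++ Sb ++ [:: m]) = size a + index u Sb}
    & index m (Sa ++ Sb ++ [:: m]) = size a + size b].
Proof.
move=> U pa pb; rewrite cat_uniq /= in U; case/and3P: U => _ /norP[ma /hasPn ba] /andP[mb _].
split=> [u ua | u ub |]; rewrite index_cat (perm_mem pa).
- by rewrite ua.
- by rewrite (negbTE (ba u ub)) index_cat (perm_mem pb) ub (perm_size pa).
rewrite (negbTE ma) index_cat (perm_mem pb) (negbTE mb) /= eqxx addn0.
by rewrite (perm_size pa) (perm_size pb).
Qed.

Lemma nth_lt_max (a b : seq nat) (m k : nat) : {in a ++ b, forall u, u < m} ->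
  k < size a + (size b).+1 -> k != size a -> nth 0 (a ++ m :: b) k < m.
Proof.
move=> ltm hk ka; apply: ltm; rewrite nth_cat mem_cat.
case: (ltngtP k (size a)) ka => // h _; first by rewrite mem_nth.
have hkb : k - (size a).+1 < size b by lia.
have -> : k - size a = (k - (size a).+1).+1 by lia.
by rewrite /= (mem_nth 0 hkb) orbT.
Qed.

Lemma stack_sort_spec_cat (a b : seq nat) (m : nat) (Sa Sb : seq nat) :
  uniq (a ++ m :: b) -> {in a ++ b, forall u, u < m} ->
  stack_sort_spec a Sa -> stack_sort_spec b Sb ->
  stack_sort_spec (a ++ m :: b) (Sa ++ Sb ++ [:: m]).
Proof.
move=> U ltm [pa oa] [pb ob]; have [idx_a idx_b idx_m] := index_stack_cat U pa pb.
have lt_a u : u \in a -> index u Sa < size a by rewrite -(perm_size pa) index_mem (perm_mem pa).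
have lt_b u : u \in b -> index u Sb < size b by rewrite -(perm_size pb) index_mem (perm_mem pb).
have nth_a k : k < size a -> nth 0 (a ++ m :: b) k = nth 0 a k by move=> hk; rewrite nth_cat hk.
have nth_m : nth 0 (a ++ m :: b) (size a) = m by rewrite nth_cat ltnn subnn.
have nth_b k : nth 0 (a ++ m :: b) (size a + k.+1) = nth 0 b k.
  by rewrite nth_cat ltnNge leq_addr /= addKn.
have in_b k : size a < k < size a + (size b).+1 ->
    exists2 k', k = size a + k'.+1 & nth 0 b k' \in b.
  move=> hk; have hkb : k - (size a).+1 < size b by lia.
  by exists (k - (size a).+1); [lia | exact: mem_nth].
split; first by apply: perm_cat => //; rewrite perm_catC /= perm_cons.
move=> i j /andP[ij]; rewrite size_cat /= => jw.
case: (ltngtP i (size a)) => hi.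
- have ia := mem_nth 0 hi; case: (ltnP j (size a)) => hj.
    rewrite dominates_catl // !nth_a // (idx_a _ (mem_nth 0 hj)) (idx_a _ ia).
    by apply: oa; rewrite ij.
  rewrite (nth_a i hi) (idx_a _ ia); split=> [lt_ji | /(_ (size a))]; last first.
    have : nth 0 a i < m by rewrite -(nth_a i hi); apply: (nth_lt_max ltm); lia.
    by rewrite nth_m (nth_a i hi) hi hj => + /(_ isT); lia.
  exfalso; have := lt_a _ ia; move: lt_ji; case: (ltngtP j (size a)) hj => // [hj _ | -> _].
    by have [j' -> jb] := in_b j ltac:(lia); rewrite nth_b (idx_b _ jb); lia.
  by rewrite nth_m idx_m; lia.
- have [i' ei ib] := in_b i ltac:(lia); have [j' ej jb] := in_b j ltac:(lia); subst i j.
  rewrite !nth_b (idx_b _ ib) (idx_b _ jb) ltn_add2l.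
  have e k : size a + k.+1 = size (rcons a m) + k by rewrite size_rcons addSnnS.
  by rewrite -cat_rcons !e dominates_catr ob //; lia.
- subst i; have [j' ej jb] := in_b j ltac:(lia); subst j.
  rewrite nth_m nth_b idx_m (idx_b _ jb) ltn_add2l lt_b //.
  by split=> // _ k hk; rewrite nth_m; apply: (nth_lt_max ltm); lia.
Qed.

Lemma ss_fuel_spec f (w : seq nat) : size w <= f -> uniq w -> stack_sort_spec w (ss_fuel f w).
Proof.
elim: f w => [|f IH] [|x w'] // sz U; try by split=> // i j; rewrite ltn0 andbF.
set w := x :: w' in sz U *.
have /foldr_maxn_mem mw : w != [::] by [].
set m := foldr maxn 0 w in mw *; set i := index m w.
have hi : i < size w by rewrite index_mem.
have w_split : w = take i w ++ m :: drop i.+1 w.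
  by rewrite -{1}(cat_take_drop i w) (drop_nth 0 hi) nth_index.
have U' := U; rewrite w_split cat_uniq /= in U'; case/and4P: U' => Ua /norP[ma _] mb Ub.
rewrite [ss_fuel _ w]/= -/m -/i w_split; apply: stack_sort_spec_cat; rewrite -?w_split //.
- move=> u; rewrite mem_cat => /orP h; rewrite ltn_neqAle foldr_maxn_ge.
    by rewrite andbT; case: h => hu; apply: contraTneq hu => ->.
  by rewrite w_split mem_cat inE; case: h => ->; rewrite ?orbT.
- by apply: IH => //; rewrite size_take hi -ltnS (leq_trans hi sz).
- by apply: IH => //; rewrite size_drop leq_subLR addSn (leq_trans sz) // ltnS leq_addl.
Qed.

Lemma stack_sortP (w : seq nat) : uniq w -> stack_sort_spec w (stack_sort w).
Proof. exact: ss_fuel_spec. Qed.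

Section PermutationValues.
Variable s : seq nat.
Hypothesis s_perm : is_perm s.
Local Notation n := (size s).
Local Notation f := (val_at s).

Lemma is_perm_uniq : uniq s.
Proof. by rewrite (perm_uniq s_perm) iota_uniq. Qed.

Lemma mem_is_perm v : (v \in s) = (0 < v <= n).
Proof. by rewrite (perm_mem s_perm) mem_iota; lia. Qed.

Lemma val_at_mem x : 0 < x <= n -> f x \in s.
Proof. by case: x => // x /andP[_]; exact: mem_nth. Qed.

Lemma val_at_range x : 0 < x <= n -> 0 < f x <= n.
Proof. by move/val_at_mem; rewrite mem_is_perm. Qed.

Lemma index_val_at x : 0 < x <= n -> index (f x) s = x.-1.
Proof. by case: x => // x /andP[_ hx]; rewrite /val_at index_uniq ?is_perm_uniq. Qed.

Lemma val_at_index v : v \in s -> f (index v s).+1 = v.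
Proof. exact: nth_index. Qed.

Lemma val_at_inj x y : 0 < x <= n -> 0 < y <= n -> f x = f y -> x = y.
Proof. by move=> hx hy e; have := index_val_at hx; rewrite e index_val_at //; lia. Qed.

End PermutationValues.

Lemma stack_sort_perm_eq s : is_perm s -> perm_eq (stack_sort s) s.
Proof. by move/is_perm_uniq/stack_sortP=> []. Qed.

Lemma stack_sort_is_perm s : is_perm s -> is_perm (stack_sort s).
Proof.
move=> sp; have ps := stack_sort_perm_eq sp.
by rewrite /is_perm (perm_size ps) (perm_trans ps).
Qed.

Lemma stack_sort_before s x y : is_perm s -> 0 < x < y -> y <= size s ->
  index (val_at s y) (stack_sort s) < index (val_at s x) (stack_sort s) <->
  (forall t, x < t <= y -> val_at s t < val_at s x).
Proof.
move=> /is_perm_uniq /stack_sortP [_ spec] hxy hy.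
rewrite /val_at spec; last by lia.
split=> h t ht; first by have := h t.-1; rewrite prednK; [apply; lia | lia].
by apply: (h t.+1); lia.
Qed.

Lemma stack_sort_index_inj s x y : is_perm s -> 0 < x <= size s -> 0 < y <= size s ->
  index (val_at s x) (stack_sort s) = index (val_at s y) (stack_sort s) -> x = y.
Proof.
move=> sp xr yr e; apply: (val_at_inj sp) => //.
have mem_T z : 0 < z <= size s -> val_at s z \in stack_sort s.
  by move=> zr; rewrite (perm_mem (stack_sort_perm_eq sp)) val_at_mem.
by rewrite -(nth_index 0 (mem_T x xr)) e nth_index // mem_T.
Qed.

Lemma interval_all_or_exists (P : pred nat) a b :
  (forall t, a < t < b -> P t) \/ exists2 t, a < t < b & ~~ P t.
Proof.
case: (boolP (all P (iota a.+1 (b - a.+1)))) => [/allP h | ].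
  by left => t ht; apply: h; rewrite mem_iota; lia.
rewrite -has_predC => /hasP [t]; rewrite mem_iota => ht pt.
by right; exists t => //; lia.
Qed.

Definition role_vals (s p q : seq nat) : seq nat :=
  [seq val_at s (nth 0 q (index r p)) | r <- iota 1 (size p)].

Section ClassicalOccurrence.
Variables (s p q : seq nat).
Hypothesis p_perm : is_perm p.
Local Notation k := (size p).
Local Notation g r := (val_at s (nth 0 q (index r p))).

Lemma nth_role_vals i : i < k -> nth 0 (role_vals s p q) i = g i.+1.
Proof. by move=> ik; rewrite (nth_map 0) ?size_iota // nth_iota. Qed.

Lemma role_of_position a : a < k -> 0 < nth 0 p a <= k /\ index (nth 0 p a) p = a.
Proof.
move=> ak; rewrite index_uniq ?is_perm_uniq //; split=> //.
by rewrite -mem_is_perm // mem_nth.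
Qed.

Lemma sorted_role_valsE : size q = k ->
  all (fun a => all (fun b =>
      (val_at s (nth 0 q a) < val_at s (nth 0 q b)) == (nth 0 p a < nth 0 p b))
    (iota 0 k)) (iota 0 k) = sorted ltn (role_vals s p q).
Proof.
move=> _; have idx r : 0 < r <= k -> index r p < k /\ nth 0 p (index r p) = r.
  by move=> hr; rewrite index_mem nth_index // mem_is_perm.
apply/idP/idP.
  move=> /allP hall; apply/(sortedP 0) => i; rewrite size_map size_iota => hi.
  rewrite !nth_role_vals ?(ltnW hi) //.
  have [ia pia] := idx i.+1 ltac:(lia); have [ib pib] := idx i.+2 ltac:(lia).
  have := hall (index i.+1 p); rewrite mem_iota add0n ia => /(_ isT) /allP.
  by move/(_ (index i.+2 p)); rewrite mem_iota add0n ib pia pib ltnSn => /(_ isT) /eqP.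
move=> srt; apply/allP => a; rewrite mem_iota => /andP[_ ak]; apply/allP => b.
rewrite mem_iota => /andP[_ bk].
have [ra ia] := role_of_position ak; have [rb ib] := role_of_position bk.
have ga : val_at s (nth 0 q a) = nth 0 (role_vals s p q) (nth 0 p a).-1.
  by rewrite nth_role_vals ?prednK ?ia //; lia.
have gb : val_at s (nth 0 q b) = nth 0 (role_vals s p q) (nth 0 p b).-1.
  by rewrite nth_role_vals ?prednK ?ib //; lia.
have mono i j : i < j < k -> nth 0 (role_vals s p q) i < nth 0 (role_vals s p q) j.
  move=> /andP[ij jk]; apply: (sorted_ltn_nth ltn_trans) => //;
    rewrite inE size_map size_iota //; lia.
rewrite ga gb; case: (ltngtP (nth 0 p a) (nth 0 p b)) => h; apply/eqP.
- by rewrite mono //; lia.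
- by apply/negbTE; rewrite -leqNgt ltnW // mono //; lia.
- by rewrite h ltnn.
Qed.

Lemma classical_occE : classical_occ s p q =
  [&& size q == k, sorted ltn q, all (fun x => 0 < x <= size s) q
    & sorted ltn (role_vals s p q)].
Proof.
rewrite /classical_occ; case: eqP => //= sq.
by rewrite sorted_role_valsE.
Qed.

Lemma map_index_iota : perm_eq [seq index r p | r <- iota 1 k] (iota 0 k).
Proof.
have -> : iota 0 k = [seq index r p | r <- p].
  apply: (@eq_from_nth _ 0); rewrite ?size_map ?size_iota // => i ik.
  by rewrite nth_iota // (nth_map 0) // index_uniq ?is_perm_uniq.
by apply: perm_map; rewrite perm_sym.
Qed.

Lemma sort_occ_vals : classical_occ s p q ->
  sort leq [seq val_at s x | x <- q] = role_vals s p q.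
Proof.
rewrite classical_occE => /and4P[/eqP sq _ _ srt].
rewrite -(sorted_sort leq_trans (sub_sorted _ srt)); last by move=> ? ?; exact: ltnW.
apply/perm_sortP; [exact: leq_total | exact: leq_trans | exact: anti_leq |].
have -> : [seq val_at s x | x <- q] = [seq val_at s (nth 0 q i) | i <- iota 0 k].
  by rewrite -{1}(mkseq_nth 0 q) sq /mkseq -map_comp.
have -> : role_vals s p q =
    [seq val_at s (nth 0 q i) | i <- [seq index r p | r <- iota 1 k]].
  by rewrite -map_comp.
by rewrite perm_sym; apply: perm_map; apply: map_index_iota.
Qed.

End ClassicalOccurrence.

Definition framed (n : nat) (l : seq nat) : seq nat := 0 :: rcons l n.+1.

Lemma nth_framed n l b : nth 0 (framed n l) b =
  if b == 0 then 0 else if b == (size l).+1 then n.+1 else nth 0 l b.-1.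
Proof.
case: b => //= b; rewrite nth_rcons eqSS.
by case: ltngtP => // h; rewrite nth_default // ltnW.
Qed.

Lemma iextE s p q a : size q = size p -> iext s p q a = nth 0 (framed (size s) q) a.
Proof. by move=> sq; rewrite nth_framed sq. Qed.

Lemma vextE s p q b : is_perm p -> classical_occ s p q ->
  vext s p q b = nth 0 (framed (size s) (role_vals s p q)) b.
Proof. by move=> pp occ; rewrite nth_framed /vext (sort_occ_vals pp occ) size_map size_iota. Qed.

Lemma occ_size s p q : is_perm p -> classical_occ s p q -> size q = size p.
Proof. by move=> pp; rewrite classical_occE // => /and4P[/eqP]. Qed.

Lemma in_boxE s p q a b x : is_perm p -> classical_occ s p q ->
  in_box s p q (a, b) x =
  (nth 0 (framed (size s) q) a < x < nth 0 (framed (size s) q) a.+1) &&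
  (nth 0 (framed (size s) (role_vals s p q)) b < val_at s x <
   nth 0 (framed (size s) (role_vals s p q)) b.+1).
Proof. by move=> pp occ; rewrite /in_box !iextE ?(occ_size pp occ) // !vextE. Qed.

Lemma sorted_ltn_nthE (q : seq nat) i j : sorted ltn q -> i < size q -> j < size q ->
  (nth 0 q i < nth 0 q j) = (i < j).
Proof.
move=> srt iq jq; have mono := sorted_ltn_nth ltn_trans 0 srt.
case: (ltngtP i j) => h; first by rewrite mono.
  by apply/negbTE; rewrite -leqNgt ltnW // mono.
by rewrite h ltnn.
Qed.

Lemma nilp_filter_iota (a : pred nat) m :
  nilp [seq x <- iota 1 m | a x] <-> forall x, 0 < x <= m -> ~~ a x.
Proof.
rewrite /nilp size_filter -leqn0 leqNgt -has_count; split.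
  by move/hasPn => h x xm; apply: h; rewrite mem_iota; lia.
by move=> h; apply/hasPn => x; rewrite mem_iota => xm; apply: h; lia.
Qed.

Lemma sorted_gtn_filter_iota (F : nat -> nat) (a : pred nat) m :
  sorted gtn [seq F x | x <- iota 1 m & a x] <->
  (forall x y, 0 < x < y -> y <= m -> a x -> a y -> F y < F x).
Proof.
set l := [seq x <- iota 1 m | a x].
have ls : sorted ltn l by apply: sorted_filter; [exact: ltn_trans | exact: iota_ltn_sorted].
have mem_l x : (x \in l) = a x && (0 < x <= m) by rewrite mem_filter mem_iota; congr (_ && _); lia.
rewrite (sorted_pairwise (fun _ _ _ h1 h2 => ltn_trans h2 h1)) pairwise_map.
split=> [/(pairwiseP 0) h x y xy ym ax ay | h].
  have xl : x \in l by rewrite mem_l ax; lia.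
  have yl : y \in l by rewrite mem_l ay; lia.
  have := h (index x l) (index y l); rewrite !inE !index_mem !nth_index // => /(_ xl yl); apply.
  by rewrite -(sorted_ltn_nthE ls) ?index_mem ?nth_index //; case/andP: xy.
apply/(pairwiseP 0) => i j; rewrite !inE => il jl ij.
have /andP[ai ri] : a (nth 0 l i) && (0 < nth 0 l i <= m) by rewrite -mem_l mem_nth.
have /andP[aj rj] : a (nth 0 l j) && (0 < nth 0 l j <= m) by rewrite -mem_l mem_nth.
have lt_ij : nth 0 l i < nth 0 l j by rewrite sorted_ltn_nthE.
by apply: h => //; lia.
Qed.

Lemma occurs_atE s P q : occurs_at s P q <->
  [/\ classical_occ s (dp_pat P) q,
      forall x, 0 < x <= size s -> all (fun ab => ~~ in_box s (dp_pat P) q ab x) (dp_shade P) &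
      forall x y, 0 < x < y -> y <= size s ->
        has (fun ab => in_box s (dp_pat P) q ab x) (dp_deco P) ->
        has (fun ab => in_box s (dp_pat P) q ab y) (dp_deco P) ->
        val_at s y < val_at s x].
Proof.
rewrite /occurs_at; split.
  case/and3P=> -> /allP shade /sorted_gtn_filter_iota deco; split=> // x xr.
  by apply/allP=> ab /shade; rewrite /box_positions nilp_filter_iota; apply.
case=> -> shade deco; apply/and3P; split=> //; last exact/sorted_gtn_filter_iota.
apply/allP=> ab abs; rewrite /box_positions nilp_filter_iota => x xr.
by move/allP: (shade x xr); apply.
Qed.

Lemma occurs_at_classical s P q : occurs_at s P q -> classical_occ s (dp_pat P) q.
Proof. by case/occurs_atE. Qed.

Lemma occurs_at_size s P q : occurs_at s P q -> is_perm (dp_pat P) -> size q = size (dp_pat P).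
Proof. by move=> occ pp; apply: occ_size pp (occurs_at_classical occ). Qed.

Section Columns.
Variables (s : seq nat) (P : dpattern) (q : seq nat).
Local Notation p := (dp_pat P).
Local Notation k := (size p).
Local Notation n := (size s).
Hypotheses (s_perm : is_perm s) (occ : occurs_at s P q) (p_perm : is_perm p).
Local Notation iext := (iext s p q).
Local Notation vext := (vext s p q).
Local Notation pos a := (nth 0 (framed n q) a).
Local Notation role b := (nth 0 (framed n (role_vals s p q)) b).

Let occ_classical : classical_occ s p q := occurs_at_classical occ.
Let sq : size q = k.
Proof. by move: occ_classical; rewrite classical_occE // => /and4P[/eqP]. Qed.
Let q_sorted : sorted ltn q.
Proof. by move: occ_classical; rewrite classical_occE // => /and4P[]. Qed.
Let q_range j : j < k -> 0 < nth 0 q j <= n.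
Proof.
move: occ_classical; rewrite classical_occE // => /and4P[_ _ /allP qr _] jk.
by apply: qr; rewrite mem_nth ?sq.
Qed.

Let posE a : pos a = iext a.
Proof. by rewrite iextE. Qed.
Let roleE b : role b = vext b.
Proof. by rewrite vextE. Qed.

Lemma column_range a x : iext a < x < iext a.+1 -> 0 < x <= n.
Proof.
move=> /andP[lo hi]; rewrite (leq_ltn_trans (leq0n _) lo) /=; move: hi.
rewrite /iext /= eqSS; case: eqP => // _.
case: (ltnP a k) => ak; last by rewrite nth_default ?sq.
by have := q_range ak; lia.
Qed.

Lemma column_notin a x : iext a < x < iext a.+1 -> x \notin q.
Proof.
move=> hx; apply/negP => /(nthP 0) [j]; rewrite sq => jk xj; move: hx.
rewrite -xj /iext /= eqSS; have := q_range jk.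
have cmp i : i < k -> (nth 0 q i < nth 0 q j) = (i < j) by move=> ik; rewrite sorted_ltn_nthE ?sq.
have cmp' i : i < k -> (nth 0 q j < nth 0 q i) = (j < i) by move=> ik; rewrite sorted_ltn_nthE ?sq.
case: (ltnP a k) => ak.
  rewrite (ltn_eqF ak) cmp' //; case: a ak => [|a] ak /=; first by lia.
  by rewrite eqSS (ltn_eqF (ltnW ak)) cmp //; lia.
rewrite (nth_default 0 (_ : size q <= a)) ?sq //.
case: (a =P 0) => [a0|_]; first by exfalso; lia.
case: (a =P k) => [->|_]; last by move=> _ /andP[_]; rewrite ltn0.
by rewrite (ltn_eqF (ltnSn k)) cmp; lia.
Qed.

Lemma column_vext_neq a x b : iext a < x < iext a.+1 -> val_at s x != vext b.
Proof.
move=> hx; have xr := column_range hx; have fr := val_at_range s_perm xr.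
rewrite /vext; case: (b =P 0) => _; first by case/andP: fr => /lt0n_neq0.
case: (b =P k.+1) => _; first by rewrite ltn_eqF // ltnS; case/andP: fr.
case: (ltnP b.-1 (size (sort leq [seq val_at s y | y <- q]))) => hb; last first.
  by rewrite nth_default //; case/andP: fr => /lt0n_neq0.
move: (mem_nth 0 hb); rewrite mem_sort => /mapP [y yq ->].
apply: contra (column_notin hx) => /eqP /(val_at_inj s_perm xr) -> //.
by move: occ_classical; rewrite classical_occE // => /and4P[_ _ /allP/(_ y yq)].
Qed.

Lemma column_band_box a x c d : iext a < x < iext a.+1 -> c <= d ->
  vext c < val_at s x < vext d -> exists2 b, c <= b < d & in_box s p q (a, b) x.
Proof.
move=> hx; elim: d => [|d IH] cd hv; first by move: cd hv; rewrite leqn0 => /eqP->; lia.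
case: (ltngtP c d.+1) cd => // [cd _ | ce]; last by move: hv; rewrite ce; lia.
have := column_vext_neq d hx; case: (ltngtP (val_at s x) (vext d)) => // h _.
  by have [b /andP[cb bd] inb] := IH cd ltac:(lia); exists b => //; rewrite cb ltnS ltnW.
exists d; first by rewrite -ltnS cd ltnSn.
by rewrite /in_box /=; case/andP: hx => -> ->; rewrite h; case/andP: hv.
Qed.

Lemma shaded_band a x c d : all (fun b => (a, b) \in dp_shade P) (iota c (d - c)) ->
  c <= d -> pos a < x < pos a.+1 -> val_at s x < role c \/ role d < val_at s x.
Proof.
rewrite !posE !roleE.
move=> /allP sh cd hx; have nc := column_vext_neq c hx; have nd := column_vext_neq d hx.
case: (ltnP (val_at s x) (vext c)) => hc; first by left.
case: (ltnP (vext d) (val_at s x)) => hd; first by right.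
have hv : vext c < val_at s x < vext d by lia.
have [b /andP[cb bd] inb] := column_band_box hx cd hv.
have abs : (a, b) \in dp_shade P by apply: sh; rewrite mem_iota; lia.
by case/occurs_atE: occ => _ /(_ _ (column_range hx)) /allP /(_ _ abs); rewrite inb.
Qed.

Lemma deco_band a x y c d : all (fun b => (a, b) \in dp_deco P) (iota c (d - c)) ->
  c <= d -> pos a < x -> x < y -> y < pos a.+1 ->
  role c < val_at s x < role d -> role c < val_at s y < role d ->
  val_at s y < val_at s x.
Proof.
rewrite !posE !roleE.
move=> /allP dec cd ax xy ya vx vy.
have in_deco z : iext a < z < iext a.+1 -> vext c < val_at s z < vext d ->
    has (fun ab => in_box s p q ab z) (dp_deco P).
  move=> hz vz; have [b /andP[cb bd] inb] := column_band_box hz cd vz.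
  by apply/hasP; exists (a, b) => //; apply: dec; rewrite mem_iota; lia.
have hx : iext a < x < iext a.+1 by rewrite ax (ltn_trans xy ya).
have hy : iext a < y < iext a.+1 by rewrite ya (ltn_trans ax xy).
case/occurs_atE: occ => _ _; apply; try exact: in_deco.
  by case/andP: (column_range hx) => -> _.
by case/andP: (column_range hy).
Qed.

Lemma shaded_below a x c : all (fun b => (a, b) \in dp_shade P) (iota c (k.+1 - c)) ->
  c <= k.+1 -> pos a < x < pos a.+1 -> val_at s x < role c.
Proof.
move=> sh ck hx; have := val_at_range s_perm (column_range (_ : iext a < x < iext a.+1)).
rewrite -!posE => /(_ hx) /andP[_ xn].
case: (shaded_band sh ck hx) => //.
by rewrite nth_framed size_map size_iota eqxx /=; lia.
Qed.

End Columns.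

Section J2Occurrence.
Variable pi : seq nat.
Hypothesis pi_perm : is_perm pi.
Local Notation n := (size pi).
Local Notation f := (val_at pi).
Local Notation T := (stack_sort pi).

Definition below a b v := forall t, a < t < b -> f t < v.

Definition precedes x y := index (f x) T < index (f y) T.

Lemma precedesP x y : 0 < x < y -> y <= n ->
  precedes y x <-> forall t, x < t <= y -> f t < f x.
Proof. exact: stack_sort_before. Qed.

Lemma precedes_total x y : 0 < x <= n -> 0 < y <= n -> x != y ->
  ~ precedes y x -> precedes x y.
Proof.
move=> xr yr xy /negP; rewrite /precedes -leqNgt leq_eqVlt => /orP[/eqP e|//].
by move: xy; rewrite (stack_sort_index_inj pi_perm xr yr e) eqxx.
Qed.

Variables i1 i2 i3 i4 i5 : nat.
Hypotheses (lt01 : 0 < i1) (lt12 : i1 < i2) (lt23 : i2 < i3) (lt34 : i3 < i4)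
  (lt45 : i4 < i5) (le5n : i5 <= n).
Hypotheses (f53 : f i5 < f i3) (f31 : f i3 < f i1) (f12 : f i1 < f i2) (f24 : f i2 < f i4).
Hypothesis mesh_j2 : below i2 i3 (f i2).

Let f_neq x y : 0 < x <= n -> 0 < y <= n -> x != y -> f x != f y.
Proof. by move=> xr yr; apply: contraNneq => /(val_at_inj pi_perm xr yr) ->. Qed.

Let T_perm : is_perm T := stack_sort_is_perm pi_perm.

Let size_T : size T = n := perm_size (stack_sort_perm_eq pi_perm).

Let mem_T x : 0 < x <= n -> f x \in T.
Proof. by move=> xr; rewrite (perm_mem (stack_sort_perm_eq pi_perm)) val_at_mem. Qed.

Definition intruder x := f i2 < f x /\ precedes i1 x /\ precedes x i3.

Definition obstruction_at p := exists r,
  [/\ p < r < i2, f i2 < f p < f r & (p < i1 -> below p i1 (f p))].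

Lemma intruderP x : 0 < x <= n -> intruder x <-> obstruction_at x.
Proof.
move=> xr; have i1r : 0 < i1 <= n by lia.
have i3r : 0 < i3 <= n by lia.
split=> [[big [p1x px3]] | [r [/andP[xr' r2] /andP[big fxr] guard]]].
  have x3 : x < i3.
    case: (ltngtP x i3) => // [x3 | e]; last by move: px3; rewrite /precedes e ltnn.
    by have := (@precedesP i3 x ltac:(lia) ltac:(lia)).1 px3 x; lia.
  have x2 : x < i2.
    case: (ltngtP x i2) => // [x2 | e]; [have := @mesh_j2 x | move: big; rewrite e]; lia.
  have [dom | [r /andP[xr' ri3] fr]] := interval_all_or_exists (fun t => f t < f x) x i3.+1.
    have := (@precedesP x i3 ltac:(lia) ltac:(lia)).2 (fun t ht => dom t ltac:(lia)).
    by move: px3; rewrite /precedes; lia.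
  have r2 : r < i2.
    have small : i2 <= r -> f r < f x.
      move=> ge; have [-> | [r3 | ->]] : r = i2 \/ i2 < r < i3 \/ r = i3 by lia.
      - by [].
      - by have := @mesh_j2 r r3; lia.
      - by lia.
    by move: fr; case: (ltnP r i2) => // /small ->.
  have fxr : f x < f r.
    rewrite ltnNge leq_eqVlt (negbTE fr) orbF; apply/eqP => /(val_at_inj pi_perm) e.
    by have := e ltac:(lia) xr; lia.
  exists r; split; rewrite ?xr' ?big //.
  by move=> x1 t ht; apply: ((@precedesP x i1 ltac:(lia) ltac:(lia)).1 p1x); lia.
split=> //; split.
  case: (ltngtP x i1) => [x1 | x1 | e]; last by move: big; rewrite e; lia.
    apply: (@precedesP x i1 ltac:(lia) ltac:(lia)).2 => t ht.
    have [t1 | ->] : t < i1 \/ t = i1 by lia.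
      by apply: (guard x1); lia.
    by lia.
  apply: precedes_total => //; first lia.
  by move/(@precedesP i1 x ltac:(lia) ltac:(lia)) => /(_ x); lia.
apply: precedes_total => //; first lia.
by move/(@precedesP x i3 ltac:(lia) ltac:(lia)) => /(_ r); lia.
Qed.

Lemma W2_occurrenceP :
  (exists q, occurs_at T W2 q /\
     forall r, 1 <= r <= 4 -> val_at T (nth 0 q (index r (dp_pat W2))) =
                              f (nth 0 [:: i1; i2; i3; i4; i5] (index r (dp_pat j2))))
  <-> forall x, 0 < x <= n -> ~ intruder x.
Proof.
have W2p : is_perm (dp_pat W2) by [].
split=> [[q [occ eqs]] x xr [big [p1x px3]] | no_intruder].
  have := occ_size W2p (occurs_at_classical occ).
  case: q occ eqs => [|a1 [|a2 [|a3 [|a4 [|]]]]] // occ eqs _.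
  have e1 := eqs 3 isT; have e2 := eqs 2 isT; have e3 := eqs 4 isT; rewrite /= in e1 e2 e3.
  have := shaded_band T_perm occ W2p (a := 1) (x := (index (f x) T).+1) (c := 4) (d := 5) isT isT.
  rewrite /= e3 val_at_index ?mem_T // size_T.
  move: (occurs_at_classical occ); rewrite classical_occE // => /and4P[_ _ rng _].
  rewrite /= size_T in rng.
  have i1a1 : index (f i1) T = a1.-1 by rewrite -e1 index_val_at ?size_T //; lia.
  have i3a2 : index (f i3) T = a2.-1 by rewrite -e2 index_val_at ?size_T //; lia.
  have := val_at_range pi_perm xr; move: p1x px3; rewrite /precedes i1a1 i3a2; lia.
have idxT x : 0 < x <= n -> (index (f x) T).+1 <= n.
  by move=> xr; rewrite -size_T index_mem mem_T.
have p13 : precedes i1 i3.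
  apply: precedes_total; try lia.
  by move/(@precedesP i1 i3 ltac:(lia) ltac:(lia)) => /(_ i2); lia.
have p32 : precedes i3 i2.
  apply/(@precedesP i2 i3 ltac:(lia) ltac:(lia)) => t ht.
  have [t3 | ->] : t < i3 \/ t = i3 by lia.
    by apply: (@mesh_j2 t); lia.
  by lia.
have p25 : precedes i2 i5.
  apply: precedes_total; try lia.
  by move/(@precedesP i2 i5 ltac:(lia) ltac:(lia)) => /(_ i4); lia.
set q := [seq (index (f x) T).+1 | x <- [:: i1; i3; i2; i5]].
have occ : classical_occ T (dp_pat W2) q.
  rewrite classical_occE //= !val_at_index ?mem_T; try lia.
  have := idxT i1; have := idxT i3; have := idxT i2; have := idxT i5.
  by move: p13 p32 p25; rewrite /precedes; lia.
exists q; split; last first.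
  by case=> [|[|[|[|[|r]]]]] //= _; rewrite val_at_index // mem_T //; lia.
apply/occurs_atE; split=> //= y yr; rewrite andbT in_boxE //= val_at_index ?mem_T; try lia.
apply/negP => /and3P[/andP[h1 h2] h3 _].
have vpi : val_at T y \in pi by rewrite -(perm_mem (stack_sort_perm_eq pi_perm)) val_at_mem.
have xr : 0 < (index (val_at T y) pi).+1 <= n by rewrite ltnS index_mem vpi.
apply: (no_intruder _ xr); rewrite /intruder /precedes val_at_index //.
by rewrite index_val_at //; lia.
Qed.

Definition decreasing_between a b u v := forall t t', a < t -> t < t' -> t' < b ->
  u < f t < v -> u < f t' < v -> f t' < f t.

Definition tail_certificate y := [/\ i1 < y < i2, f i2 < f y, below i1 y (f i2),
  below y i2 (f y) & decreasing_between y i2 (f i2) (f y)].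

Definition left_guard y := forall p, 0 < p < i1 -> f i2 < f p -> below p i1 (f p) -> f y < f p.

Definition good := below i1 i2 (f i2) \/ exists2 y, tail_certificate y & left_guard y.

Lemma goodP : good <-> forall p, 0 < p <= n -> ~ obstruction_at p.
Proof.
split=> [gd p pr [r [/andP[pr' r2] /andP[big fpr] gp]] | no_obs].
  have r1 : i1 < r.
    have [r1 | [r1 | //]] : r < i1 \/ r = i1 \/ i1 < r by lia.
    - by have := gp ltac:(lia) r; lia.
    - by move: fpr; rewrite r1; lia.
  case: gd => [low | [y [y12 fy lowy topy dec] guard]]; first by have := low r; lia.
  have fry : f r <= f y.
    have [ry | [-> | yr]] : r < y \/ r = y \/ y < r by lia.
    - by have := lowy r; lia.
    - by [].
    - by have := topy r; lia.
  have p_i1 : p != i1 by apply: contraTneq big => ->; lia.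
  have [p1 | p1] : p < i1 \/ i1 < p by lia.
    by have := guard p ltac:(lia) big (gp p1); lia.
  have [py | [e | yp]] : p < y \/ p = y \/ y < p by lia.
  - by have := lowy p; lia.
  - by move: fpr pr'; rewrite e => *; have := topy r; lia.
  - by have := dec p r; have := topy p; have := topy r; lia.
have obstructed p r : 0 < p -> p < r < i2 -> f i2 < f p < f r ->
    (p < i1 -> below p i1 (f p)) -> False.
  by move=> p0 pr fpr guard; apply: (no_obs p); [lia | exists r].
have [low | [t0 /andP[t01 t02] ft0]] := interval_all_or_exists (fun t => f t < f i2) i1 i2.
  by left.
have exY : exists t, (i1 < t < i2) && (f i2 < f t).
  by exists t0; have := @f_neq t0 i2; rewrite t01 t02; lia.
case: (ex_minnP exY) => y /andP[y12 fy] ymin; right; exists y; first split=> //.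
- move=> t ht; have := @f_neq t i2; have := ymin t; lia.
- move=> t ht; case: (ltnP (f y) (f t)) => h; last by have := @f_neq t y; lia.
  by case: (obstructed y t) => //; lia.
- move=> t t' yt tt' t'2 /andP[ft _] /andP[ft' _]; case: (ltnP (f t) (f t')) => h.
    by case: (obstructed t t') => //; lia.
  by have := @f_neq t t'; lia.
move=> p p1 fp guard; case: (ltnP (f p) (f y)) => h.
  by case: (obstructed p y) => //; lia.
by have := @f_neq p y; lia.
Qed.

Definition first_rise x := [/\ i1 < x < i2, f i1 < f x & below i1 x (f i1)].

Definition gap y := forall t, 0 < t < i1 -> f t < f i2 \/ f y < f t.

Definition shadow z := [/\ 0 < z < i1, f i2 < f z & below z i1 (f i2)].

Lemma below_join a b c u v : below a b u -> u <= v -> f b < v -> below b c v -> below a c v.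
Proof.
move=> ab uv fb bc t /andP[lo hi]; case: (ltngtP t b) => [tb | bt | ->] //.
- by have := ab t; lia.
- by apply: bc; rewrite bt.
Qed.

Lemma first_rise_or_low : below i1 i2 (f i1) \/ exists x, first_rise x.
Proof.
have [low | [t0 /andP[t01 t02] ft0]] := interval_all_or_exists (fun t => f t < f i1) i1 i2.
  by left.
have ex : exists t, (i1 < t < i2) && (f i1 < f t).
  by exists t0; have := @f_neq t0 i1; rewrite t01 t02; lia.
case: (ex_minnP ex) => x /andP[x12 fx] xmin; right; exists x; split=> // t ht.
case: (ltnP (f i1) (f t)) => h; first by have := xmin t; lia.
by have := @f_neq t i1; lia.
Qed.

Lemma shadow_or_clear : below 0 i1 (f i2) \/ exists z, shadow z.
Proof.
have [clear | [t0 /andP[t00 t01] ft0]] := interval_all_or_exists (fun t => f t < f i2) 0 i1.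
  by left.
have ex : exists t, (0 < t < i1) && (f i2 < f t).
  by exists t0; have := @f_neq t0 i2; rewrite t00 t01; lia.
have ub t : (0 < t < i1) && (f i2 < f t) -> t <= i1 by case/andP => /andP[_ /ltnW].
case: (ex_maxnP ex ub) => z /andP[z01 fz] zmax; right; exists z; split=> // t ht.
case: (ltnP (f i2) (f t)) => h; first by have := zmax t; lia.
by have := @f_neq t i2; lia.
Qed.

(* Every shaded box of a J2_k occurrence built below is emptied by one of the
   column bounds in the context, instantiated at the entry t of the box. *)
Ltac refute_box t :=
  apply/negP => /andP[/andP[? ?] /andP[? ?]];
  first [ lia
        | match goal with H : below _ _ _ |- _ => pose proof (H t); lia end
        | match goal with H : gap _ |- _ => pose proof (H t); lia end ].

Ltac refute_deco t t' :=
  match goal with D : decreasing_between _ _ _ _ |- _ => pose proof (D t t'); lia end.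

Ltac occurs_by_boxes :=
  have mesh : below i2 i3 (f i2) := mesh_j2;
  match goal with |- is_true (occurs_at ?s ?P ?q) =>
    assert (cl : classical_occ s (dp_pat P) q) by (rewrite classical_occE //=; lia) end;
  apply/occurs_atE; split => //;
  let t := fresh "t" in let t' := fresh "t'" in
  try (intros t t' ? ?; rewrite /= ?in_boxE //=; refute_deco t t');
  try (intros t ?; rewrite /= ?in_boxE //=; repeat (apply/andP; split); try done;
       refute_box t).

Lemma J2_1_occurs x : first_rise x -> f x < f i2 -> below x i2 (f i2) ->
  occurs_at pi (cp_dp J2_1) [:: i1; x; i2; i3; i4; i5].
Proof.
case=> /andP[x1 x2] fx lowx fx2 midx.
by occurs_by_boxes.
Qed.

Lemma J2_2_occurs x y : first_rise x -> x < y -> tail_certificate y -> gap y ->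
  f y < f i4 -> occurs_at pi (cp_dp J2_2) [:: i1; x; y; i2; i3; i4; i5].
Proof.
case=> /andP[x1 x2] fx lowx xy [/andP[y1 y2] fy lowy topy dec] G fy4.
have fx2 : f x < f i2 by apply: lowy; lia.
by occurs_by_boxes.
Qed.

Lemma J2_3_occurs z x y : shadow z -> first_rise x -> x < y -> tail_certificate y ->
  f y < f z < f i4 -> occurs_at pi (cp_dp J2_3) [:: z; i1; x; y; i2; i3; i4; i5].
Proof.
case=> /andP[z0 z1] fz lowz [/andP[x1 x2] fx lowx] xy [/andP[y1 y2] fy lowy topy dec] ord.
have fx2 : f x < f i2 by apply: lowy; lia.
by occurs_by_boxes.
Qed.

Lemma J2_4_occurs z x y : shadow z -> first_rise x -> x < y -> tail_certificate y ->
  f y < f i4 < f z -> occurs_at pi (cp_dp J2_4) [:: z; i1; x; y; i2; i3; i4; i5].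
Proof.
case=> /andP[z0 z1] fz lowz [/andP[x1 x2] fx lowx] xy [/andP[y1 y2] fy lowy topy dec] ord.
have fx2 : f x < f i2 by apply: lowy; lia.
by occurs_by_boxes.
Qed.

Lemma J2_5_occurs x y : first_rise x -> x < y -> tail_certificate y -> gap y ->
  f i4 < f y -> occurs_at pi (cp_dp J2_5) [:: i1; x; y; i2; i3; i4; i5].
Proof.
case=> /andP[x1 x2] fx lowx xy [/andP[y1 y2] fy lowy topy dec] G fy4.
have fx2 : f x < f i2 by apply: lowy; lia.
by occurs_by_boxes.
Qed.

Lemma J2_6_occurs z x y : shadow z -> first_rise x -> x < y -> tail_certificate y ->
  f i4 < f y < f z -> occurs_at pi (cp_dp J2_6) [:: z; i1; x; y; i2; i3; i4; i5].
Proof.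
case=> /andP[z0 z1] fz lowz [/andP[x1 x2] fx lowx] xy [/andP[y1 y2] fy lowy topy dec] ord.
have fx2 : f x < f i2 by apply: lowy; lia.
by occurs_by_boxes.
Qed.

Lemma J2_7_occurs y : first_rise y -> tail_certificate y -> gap y ->
  f y < f i4 -> occurs_at pi (cp_dp J2_7) [:: i1; y; i2; i3; i4; i5].
Proof.
case=> _ _ lowx [/andP[y1 y2] fy lowy topy dec] G fy4.
by occurs_by_boxes.
Qed.

Lemma J2_8_occurs z y : shadow z -> first_rise y -> tail_certificate y ->
  f y < f z < f i4 -> occurs_at pi (cp_dp J2_8) [:: z; i1; y; i2; i3; i4; i5].
Proof.
case=> /andP[z0 z1] fz lowz [_ _ lowx] [/andP[y1 y2] fy lowy topy dec] ord.
by occurs_by_boxes.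
Qed.

Lemma J2_9_occurs z y : shadow z -> first_rise y -> tail_certificate y ->
  f y < f i4 < f z -> occurs_at pi (cp_dp J2_9) [:: z; i1; y; i2; i3; i4; i5].
Proof.
case=> /andP[z0 z1] fz lowz [_ _ lowx] [/andP[y1 y2] fy lowy topy dec] ord.
by occurs_by_boxes.
Qed.

Lemma J2_10_occurs y : first_rise y -> tail_certificate y -> gap y ->
  f i4 < f y -> occurs_at pi (cp_dp J2_10) [:: i1; y; i2; i3; i4; i5].
Proof.
case=> _ _ lowx [/andP[y1 y2] fy lowy topy dec] G fy4.
by occurs_by_boxes.
Qed.

Lemma J2_11_occurs z y : shadow z -> first_rise y -> tail_certificate y ->
  f i4 < f y < f z -> occurs_at pi (cp_dp J2_11) [:: z; i1; y; i2; i3; i4; i5].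
Proof.
case=> /andP[z0 z1] fz lowz [_ _ lowx] [/andP[y1 y2] fy lowy topy dec] ord.
by occurs_by_boxes.
Qed.

Lemma J2_12_occurs : below i1 i2 (f i1) ->
  occurs_at pi (cp_dp J2_12) [:: i1; i2; i3; i4; i5].
Proof. by move=> low; occurs_by_boxes. Qed.

Definition J2_witnessed := exists2 J, In J J2_list &
  exists q, occurs_at pi (cp_dp J) q /\ uncircled J q = [:: i1; i2; i3; i4; i5].

Lemma J2_witnessedP J q : In J J2_list -> occurs_at pi (cp_dp J) q ->
  uncircled J q = [:: i1; i2; i3; i4; i5] -> J2_witnessed.
Proof. by move=> inJ occ unc; exists J => //; exists q. Qed.

Lemma J2_witnessed_of_low : below i1 i2 (f i2) -> J2_witnessed.
Proof.
move=> low; case: first_rise_or_low => [low1 | [x rise]].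
  by apply: (J2_witnessedP (J := J2_12)) (J2_12_occurs low1) _ => /=; tauto.
have [/andP[x1 x2] _ _] := rise.
apply: (J2_witnessedP (J := J2_1)) (J2_1_occurs rise _ _) _ => /=; try tauto.
  by apply: low; lia.
by move=> t ht; apply: low; lia.
Qed.

Lemma J2_witnessed_of_tail y : tail_certificate y -> left_guard y -> J2_witnessed.
Proof.
move=> cert guard; have [/andP[y1 y2] fy lowy _ _] := cert.
have [x rise] : exists x, first_rise x.
  by case: first_rise_or_low => // low1; have := low1 y; lia.
have [/andP[x1 x2] fx lowx] := rise.
have fy4 : f y != f i4 by apply: f_neq; lia.
have [xy | exy] : x < y \/ x = y by have := lowx y; lia.
all: case: shadow_or_clear => [clear | [z sh]].
- have G : gap y by move=> t ht; left; apply: clear.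
  have [y4 | y4] : f y < f i4 \/ f i4 < f y by lia.
    by apply: (J2_witnessedP (J := J2_2)) (J2_2_occurs rise xy cert G y4) _ => /=; tauto.
  by apply: (J2_witnessedP (J := J2_5)) (J2_5_occurs rise xy cert G y4) _ => /=; tauto.
- have [/andP[z0 z1] fz lowz] := sh.
  have fyz : f y < f z by apply: guard; try lia; move=> t ht; have := lowz t ht; lia.
  have fz4 : f z != f i4 by apply: f_neq; lia.
  have [o | [o | o]] : f y < f z < f i4 \/ f y < f i4 < f z \/ f i4 < f y < f z by lia.
  + by apply: (J2_witnessedP (J := J2_3)) (J2_3_occurs sh rise xy cert o) _ => /=; tauto.
  + by apply: (J2_witnessedP (J := J2_4)) (J2_4_occurs sh rise xy cert o) _ => /=; tauto.
  + by apply: (J2_witnessedP (J := J2_6)) (J2_6_occurs sh rise xy cert o) _ => /=; tauto.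
- subst x; have G : gap y by move=> t ht; left; apply: clear.
  have [y4 | y4] : f y < f i4 \/ f i4 < f y by lia.
    by apply: (J2_witnessedP (J := J2_7)) (J2_7_occurs rise cert G y4) _ => /=; tauto.
  by apply: (J2_witnessedP (J := J2_10)) (J2_10_occurs rise cert G y4) _ => /=; tauto.
- subst x; have [/andP[z0 z1] fz lowz] := sh.
  have fyz : f y < f z by apply: guard; try lia; move=> t ht; have := lowz t ht; lia.
  have fz4 : f z != f i4 by apply: f_neq; lia.
  have [o | [o | o]] : f y < f z < f i4 \/ f y < f i4 < f z \/ f i4 < f y < f z by lia.
  + by apply: (J2_witnessedP (J := J2_8)) (J2_8_occurs sh rise cert o) _ => /=; tauto.
  + by apply: (J2_witnessedP (J := J2_9)) (J2_9_occurs sh rise cert o) _ => /=; tauto.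
  + by apply: (J2_witnessedP (J := J2_11)) (J2_11_occurs sh rise cert o) _ => /=; tauto.
Qed.

Lemma good_of_gap y : tail_certificate y -> gap y -> good.
Proof.
move=> cert G; right; exists y => // p p1 fp _.
by case: cert => _ fy _ _ _; case: (G p p1); lia.
Qed.

Lemma good_of_shadow z y : shadow z -> tail_certificate y -> f y < f z -> good.
Proof.
move=> [/andP[z0 z1] fz lowz] cert fyz; right; exists y => // p p1 fp guard.
case: (ltngtP p z) => [pz | zp | -> //].
  by have := guard z; lia.
by have := lowz p; lia.
Qed.

Lemma J2_1_good q : occurs_at pi (cp_dp J2_1) q ->
  uncircled J2_1 q = [:: i1; i2; i3; i4; i5] -> good.
Proof.
move=> occ; have := occurs_at_size occ isT; move: occ.
case: q => [|a [|x [|b [|c [|d [|e [|]]]]]]] //= occ _ [ea eb ec ed ee].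
subst a b c d e.
move: (occurs_at_classical occ); rewrite classical_occE //= => ch.
have lowx : below i1 x (f i1) := fun t => shaded_below pi_perm occ isT (a := 1) (c := 3) isT isT.
have midx : below x i2 (f i2) := fun t => shaded_below pi_perm occ isT (a := 2) (c := 5) isT isT.
by left; apply: (below_join lowx _ _ midx); lia.
Qed.

Lemma J2_2_good q : occurs_at pi (cp_dp J2_2) q ->
  uncircled J2_2 q = [:: i1; i2; i3; i4; i5] -> good.
Proof.
move=> occ; have := occurs_at_size occ isT; move: occ.
case: q => [|a [|x [|y [|b [|c [|d [|e [|]]]]]]]] //= occ _ [ea eb ec ed ee].
subst a b c d e.
move: (occurs_at_classical occ); rewrite classical_occE //= => ch.
have lowx : below i1 x (f i1) := fun t => shaded_below pi_perm occ isT (a := 1) (c := 3) isT isT.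
have midxy : below x y (f i2) := fun t => shaded_below pi_perm occ isT (a := 2) (c := 5) isT isT.
have topy : below y i2 (f y) := fun t => shaded_below pi_perm occ isT (a := 3) (c := 6) isT isT.
have G : gap y := fun t => shaded_band pi_perm occ isT (a := 0) (c := 5) (d := 6) isT isT.
have dec : decreasing_between y i2 (f i2) (f y) :=
  fun t t' => deco_band pi_perm occ isT (a := 3) (c := 5) (d := 6) isT isT.
apply: (good_of_gap (y := y)) G; split => //; try lia.
by apply: (below_join lowx _ _ midxy); lia.
Qed.

Lemma J2_3_good q : occurs_at pi (cp_dp J2_3) q ->
  uncircled J2_3 q = [:: i1; i2; i3; i4; i5] -> good.
Proof.
move=> occ; have := occurs_at_size occ isT; move: occ.
case: q => [|z [|a [|x [|y [|b [|c [|d [|e [|]]]]]]]]] //= occ _ [ea eb ec ed ee].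
subst a b c d e.
move: (occurs_at_classical occ); rewrite classical_occE //= => ch.
have lowz : below z i1 (f i2) := fun t => shaded_below pi_perm occ isT (a := 1) (c := 5) isT isT.
have lowx : below i1 x (f i1) := fun t => shaded_below pi_perm occ isT (a := 2) (c := 3) isT isT.
have midxy : below x y (f i2) := fun t => shaded_below pi_perm occ isT (a := 3) (c := 5) isT isT.
have topy : below y i2 (f y) := fun t => shaded_below pi_perm occ isT (a := 4) (c := 6) isT isT.
have dec : decreasing_between y i2 (f i2) (f y) :=
  fun t t' => deco_band pi_perm occ isT (a := 4) (c := 5) (d := 6) isT isT.
apply: (good_of_shadow (z := z) (y := y)); try split => //; try lia.
by apply: (below_join lowx _ _ midxy); lia.
Qed.

Lemma J2_4_good q : occurs_at pi (cp_dp J2_4) q ->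
  uncircled J2_4 q = [:: i1; i2; i3; i4; i5] -> good.
Proof.
move=> occ; have := occurs_at_size occ isT; move: occ.
case: q => [|z [|a [|x [|y [|b [|c [|d [|e [|]]]]]]]]] //= occ _ [ea eb ec ed ee].
subst a b c d e.
move: (occurs_at_classical occ); rewrite classical_occE //= => ch.
have lowz : below z i1 (f i2) := fun t => shaded_below pi_perm occ isT (a := 1) (c := 5) isT isT.
have lowx : below i1 x (f i1) := fun t => shaded_below pi_perm occ isT (a := 2) (c := 3) isT isT.
have midxy : below x y (f i2) := fun t => shaded_below pi_perm occ isT (a := 3) (c := 5) isT isT.
have topy : below y i2 (f y) := fun t => shaded_below pi_perm occ isT (a := 4) (c := 6) isT isT.
have dec : decreasing_between y i2 (f i2) (f y) :=
  fun t t' => deco_band pi_perm occ isT (a := 4) (c := 5) (d := 6) isT isT.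
apply: (good_of_shadow (z := z) (y := y)); try split => //; try lia.
by apply: (below_join lowx _ _ midxy); lia.
Qed.

Lemma J2_5_good q : occurs_at pi (cp_dp J2_5) q ->
  uncircled J2_5 q = [:: i1; i2; i3; i4; i5] -> good.
Proof.
move=> occ; have := occurs_at_size occ isT; move: occ.
case: q => [|a [|x [|y [|b [|c [|d [|e [|]]]]]]]] //= occ _ [ea eb ec ed ee].
subst a b c d e.
move: (occurs_at_classical occ); rewrite classical_occE //= => ch.
have lowx : below i1 x (f i1) := fun t => shaded_below pi_perm occ isT (a := 1) (c := 3) isT isT.
have midxy : below x y (f i2) := fun t => shaded_below pi_perm occ isT (a := 2) (c := 5) isT isT.
have topy : below y i2 (f y) := fun t => shaded_below pi_perm occ isT (a := 3) (c := 7) isT isT.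
have G : gap y := fun t => shaded_band pi_perm occ isT (a := 0) (c := 5) (d := 7) isT isT.
have dec : decreasing_between y i2 (f i2) (f y) :=
  fun t t' => deco_band pi_perm occ isT (a := 3) (c := 5) (d := 7) isT isT.
apply: (good_of_gap (y := y)) G; split => //; try lia.
by apply: (below_join lowx _ _ midxy); lia.
Qed.

Lemma J2_6_good q : occurs_at pi (cp_dp J2_6) q ->
  uncircled J2_6 q = [:: i1; i2; i3; i4; i5] -> good.
Proof.
move=> occ; have := occurs_at_size occ isT; move: occ.
case: q => [|z [|a [|x [|y [|b [|c [|d [|e [|]]]]]]]]] //= occ _ [ea eb ec ed ee].
subst a b c d e.
move: (occurs_at_classical occ); rewrite classical_occE //= => ch.
have lowz : below z i1 (f i2) := fun t => shaded_below pi_perm occ isT (a := 1) (c := 5) isT isT.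
have lowx : below i1 x (f i1) := fun t => shaded_below pi_perm occ isT (a := 2) (c := 3) isT isT.
have midxy : below x y (f i2) := fun t => shaded_below pi_perm occ isT (a := 3) (c := 5) isT isT.
have topy : below y i2 (f y) := fun t => shaded_below pi_perm occ isT (a := 4) (c := 7) isT isT.
have dec : decreasing_between y i2 (f i2) (f y) :=
  fun t t' => deco_band pi_perm occ isT (a := 4) (c := 5) (d := 7) isT isT.
apply: (good_of_shadow (z := z) (y := y)); try split => //; try lia.
by apply: (below_join lowx _ _ midxy); lia.
Qed.

Lemma J2_7_good q : occurs_at pi (cp_dp J2_7) q ->
  uncircled J2_7 q = [:: i1; i2; i3; i4; i5] -> good.
Proof.
move=> occ; have := occurs_at_size occ isT; move: occ.
case: q => [|a [|y [|b [|c [|d [|e [|]]]]]]] //= occ _ [ea eb ec ed ee].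
subst a b c d e.
move: (occurs_at_classical occ); rewrite classical_occE //= => ch.
have lowy : below i1 y (f i1) := fun t => shaded_below pi_perm occ isT (a := 1) (c := 3) isT isT.
have topy : below y i2 (f y) := fun t => shaded_below pi_perm occ isT (a := 2) (c := 5) isT isT.
have G : gap y := fun t => shaded_band pi_perm occ isT (a := 0) (c := 4) (d := 5) isT isT.
have dec : decreasing_between y i2 (f i2) (f y) :=
  fun t t' => deco_band pi_perm occ isT (a := 2) (c := 4) (d := 5) isT isT.
apply: (good_of_gap (y := y)) G; split => //; try lia.
by move=> t ht; have := lowy t ht; lia.
Qed.

Lemma J2_8_good q : occurs_at pi (cp_dp J2_8) q ->
  uncircled J2_8 q = [:: i1; i2; i3; i4; i5] -> good.
Proof.
move=> occ; have := occurs_at_size occ isT; move: occ.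
case: q => [|z [|a [|y [|b [|c [|d [|e [|]]]]]]]] //= occ _ [ea eb ec ed ee].
subst a b c d e.
move: (occurs_at_classical occ); rewrite classical_occE //= => ch.
have lowz : below z i1 (f i2) := fun t => shaded_below pi_perm occ isT (a := 1) (c := 4) isT isT.
have lowy : below i1 y (f i1) := fun t => shaded_below pi_perm occ isT (a := 2) (c := 3) isT isT.
have topy : below y i2 (f y) := fun t => shaded_below pi_perm occ isT (a := 3) (c := 5) isT isT.
have dec : decreasing_between y i2 (f i2) (f y) :=
  fun t t' => deco_band pi_perm occ isT (a := 3) (c := 4) (d := 5) isT isT.
apply: (good_of_shadow (z := z) (y := y)); try split => //; try lia.
by move=> t ht; have := lowy t ht; lia.
Qed.

Lemma J2_9_good q : occurs_at pi (cp_dp J2_9) q ->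
  uncircled J2_9 q = [:: i1; i2; i3; i4; i5] -> good.
Proof.
move=> occ; have := occurs_at_size occ isT; move: occ.
case: q => [|z [|a [|y [|b [|c [|d [|e [|]]]]]]]] //= occ _ [ea eb ec ed ee].
subst a b c d e.
move: (occurs_at_classical occ); rewrite classical_occE //= => ch.
have lowz : below z i1 (f i2) := fun t => shaded_below pi_perm occ isT (a := 1) (c := 4) isT isT.
have lowy : below i1 y (f i1) := fun t => shaded_below pi_perm occ isT (a := 2) (c := 3) isT isT.
have topy : below y i2 (f y) := fun t => shaded_below pi_perm occ isT (a := 3) (c := 5) isT isT.
have dec : decreasing_between y i2 (f i2) (f y) :=
  fun t t' => deco_band pi_perm occ isT (a := 3) (c := 4) (d := 5) isT isT.
apply: (good_of_shadow (z := z) (y := y)); try split => //; try lia.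
by move=> t ht; have := lowy t ht; lia.
Qed.

Lemma J2_10_good q : occurs_at pi (cp_dp J2_10) q ->
  uncircled J2_10 q = [:: i1; i2; i3; i4; i5] -> good.
Proof.
move=> occ; have := occurs_at_size occ isT; move: occ.
case: q => [|a [|y [|b [|c [|d [|e [|]]]]]]] //= occ _ [ea eb ec ed ee].
subst a b c d e.
move: (occurs_at_classical occ); rewrite classical_occE //= => ch.
have lowy : below i1 y (f i1) := fun t => shaded_below pi_perm occ isT (a := 1) (c := 3) isT isT.
have topy : below y i2 (f y) := fun t => shaded_below pi_perm occ isT (a := 2) (c := 6) isT isT.
have G : gap y := fun t => shaded_band pi_perm occ isT (a := 0) (c := 4) (d := 6) isT isT.
have dec : decreasing_between y i2 (f i2) (f y) :=
  fun t t' => deco_band pi_perm occ isT (a := 2) (c := 4) (d := 6) isT isT.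
apply: (good_of_gap (y := y)) G; split => //; try lia.
by move=> t ht; have := lowy t ht; lia.
Qed.

Lemma J2_11_good q : occurs_at pi (cp_dp J2_11) q ->
  uncircled J2_11 q = [:: i1; i2; i3; i4; i5] -> good.
Proof.
move=> occ; have := occurs_at_size occ isT; move: occ.
case: q => [|z [|a [|y [|b [|c [|d [|e [|]]]]]]]] //= occ _ [ea eb ec ed ee].
subst a b c d e.
move: (occurs_at_classical occ); rewrite classical_occE //= => ch.
have lowz : below z i1 (f i2) := fun t => shaded_below pi_perm occ isT (a := 1) (c := 4) isT isT.
have lowy : below i1 y (f i1) := fun t => shaded_below pi_perm occ isT (a := 2) (c := 3) isT isT.
have topy : below y i2 (f y) := fun t => shaded_below pi_perm occ isT (a := 3) (c := 6) isT isT.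
have dec : decreasing_between y i2 (f i2) (f y) :=
  fun t t' => deco_band pi_perm occ isT (a := 3) (c := 4) (d := 6) isT isT.
apply: (good_of_shadow (z := z) (y := y)); try split => //; try lia.
by move=> t ht; have := lowy t ht; lia.
Qed.

Lemma J2_12_good q : occurs_at pi (cp_dp J2_12) q ->
  uncircled J2_12 q = [:: i1; i2; i3; i4; i5] -> good.
Proof.
move=> occ; have := occurs_at_size occ isT; move: occ.
case: q => [|a [|b [|c [|d [|e [|]]]]]] //= occ _ [ea eb ec ed ee].
subst a b c d e.
move: (occurs_at_classical occ); rewrite classical_occE //= => ch.
have low : below i1 i2 (f i1) := fun t => shaded_below pi_perm occ isT (a := 1) (c := 3) isT isT.
by left => t ht; have := low t ht; lia.
Qed.

Lemma good_of_J2_witnessed : J2_witnessed -> good.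
Proof.
move=> [J inJ [q [occ unc]]]; move: inJ occ unc => /=.
case=> [<-|[<-|[<-|[<-|[<-|[<-|[<-|[<-|[<-|[<-|[<-|[<-|[]]]]]]]]]]]]].
- exact: J2_1_good.
- exact: J2_2_good.
- exact: J2_3_good.
- exact: J2_4_good.
- exact: J2_5_good.
- exact: J2_6_good.
- exact: J2_7_good.
- exact: J2_8_good.
- exact: J2_9_good.
- exact: J2_10_good.
- exact: J2_11_good.
- exact: J2_12_good.
Qed.

Lemma j2_W2_characterization :
  (exists q, occurs_at T W2 q /\
     forall r, 1 <= r <= 4 -> val_at T (nth 0 q (index r (dp_pat W2))) =
                              f (nth 0 [:: i1; i2; i3; i4; i5] (index r (dp_pat j2))))
  <-> J2_witnessed.
Proof.
rewrite W2_occurrenceP; split=> [no_intruder | /good_of_J2_witnessed/goodP no_obs x xr].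
  case/goodP: (fun p pr => no_intruder p pr \o (intruderP pr).2) => [low | [y cert guard]].
    exact: J2_witnessed_of_low.
  exact: J2_witnessed_of_tail cert guard.
by move/(intruderP xr); apply: no_obs.
Qed.

End J2Occurrence.

Theorem proposition3p7 (pi w : seq nat) :
  is_perm pi -> occurs_at pi j2 w ->
  ((exists q : seq nat,
      occurs_at (stack_sort pi) W2 q /\
      (forall r, 1 <= r <= 4 ->
         val_at (stack_sort pi) (nth 0 q (index r (dp_pat W2))) =
         val_at pi (nth 0 w (index r (dp_pat j2)))))
   <->
   (exists2 J : cpattern, In J J2_list &
      exists q : seq nat, occurs_at pi (cp_dp J) q /\ uncircled J q = w)).
Proof.
move=> pi_perm occ; have := occurs_at_size occ isT; move: occ.
case: w => [|i1 [|i2 [|i3 [|i4 [|i5 [|]]]]]] //= occ _.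
move: (occurs_at_classical occ); rewrite classical_occE //= => chains.
have mesh : below pi i2 i3 (val_at pi i2) :=
  fun t => shaded_below pi_perm occ isT (a := 2) (c := 4) isT isT.
by apply: j2_W2_characterization => //; lia.
Qed.
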